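(* Let $a,b>0$ and $2\le k<m\le n-1$ be integers with $a^m\neq b^k$. Let $x_1,\dots,x_n$ and $y_1,\dots,y_n$ be positive real numbers such that $$x_I+y_I=2a\quad\text{and}\quad x_J+y_J=2b$$ whenever $I,J\subset\{1,\dots,n\}$, $|I|=k$ and $|J|=m$. Then there is a constant $c>0$ such that $x_\iota/y_\iota=c$ for $\iota=1,\dots,n$.
   Context: For real numbers $x_1,\dots,x_n$ and $I\subset\{1,\dots,n\}$, $x_I:=\prod_{\iota\in I}x_\iota$ (with $x_\emptyset=1$); $|I|$ is the cardinality of $I$. *)

From mathcomp Require Import all_boot all_order all_algebra.
From mathcomp Require Import reals.
Set Implicit Arguments. Unset Strict Implicit. Unset Printing Implicit Defensive.
Import Order.TTheory GRing.Theory Num.Theory.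
Local Open Scope ring_scope.

Definition prodI (R : realType) (n : nat) (x : 'I_n -> R) (I : {set 'I_n}) : R :=
  \prod_(i in I) x i.

(* If two indices i, j have distinct ratios x/y, the vectors (x_i, y_i) and
   (x_j, y_j) are linearly independent.  Exchanging two indices l, l' in a
   k-set containing i, resp. j, yields a 2x2 linear system in
   (x_l - x_l', y_l - y_l') with these vectors as rows, so all indices outside
   {i, j} carry the same pair.  Playing this off against a second pair with
   distinct ratios shows that all indices but one, i0, carry a common pair
   (X, Y).  Exchanging i0 in k-sets and in m-sets gives a second 2x2 system,
   which forces (x_i0, y_i0) = (X, Y) unless X^(k-1) Y^(m-1) = Y^(k-1) X^(m-1),
   i.e. X = Y; but then X^k = a and X^m = b, contradicting a^m <> b^k. *)

From mathcomp Require Import all_boot all_order all_algebra.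
From mathcomp Require Import reals.
From mathcomp Require Import ring lra zify.
Set Implicit Arguments.
Unset Strict Implicit.
Unset Printing Implicit Defensive.

Import Order.TTheory GRing.Theory Num.Theory.
Local Open Scope ring_scope.

Lemma leq_card_setC_seq (T : finType) (s : seq T) (t : nat) :
  (t + size s <= #|T|)%N -> (t <= #|~: [set z in s]|)%N.
Proof.
move=> le_ts; rewrite cardsCs setCK cardsE.
by apply: leq_trans (leq_sub2l _ (card_size s)); lia.
Qed.

Lemma exists_set_avoiding (T : finType) (s : seq T) (t : nat) :
  (t + size s <= #|T|)%N ->
  exists2 S : {set T}, #|S| = t & {in s, forall l, l \notin S}.
Proof.
move=> /leq_card_setC_seq/card_geqP[r [r_uniq r_size r_sub]].
exists [set z in r]; first by rewrite cardsE (card_uniqP r_uniq).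
by move=> l ls; rewrite inE; apply: contraL ls => /r_sub; rewrite !inE.
Qed.

Lemma exists_notin (T : finType) (s : seq T) :
  (size s < #|T|)%N -> exists l, l \notin s.
Proof. by move=> /(@leq_card_setC_seq _ _ 1)/card_gt0P[l]; rewrite !inE; exists l. Qed.

Lemma cramer2_eq0 (R : idomainType) (a b c d u v : R) :
  a * d != b * c -> u * a + v * b = 0 -> u * c + v * d = 0 -> u = 0 /\ v = 0.
Proof.
rewrite -subr_eq0 => det_neq0 e1 e2.
have eu : u * (a * d - b * c) = d * (u * a + v * b) - b * (u * c + v * d) by ring.
have ev : v * (a * d - b * c) = a * (u * c + v * d) - c * (u * a + v * b) by ring.
rewrite e1 e2 !mulr0 subr0 in eu ev.
by move/eqP: eu; move/eqP: ev; rewrite !mulf_eq0 (negbTE det_neq0) !orbF => /eqP-> /eqP->.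
Qed.

Lemma eq_of_swapped_powers (R : numDomainType) (X Y : R) (p q : nat) :
  0 < X -> 0 < Y -> (p < q)%N -> X ^+ p * Y ^+ q = Y ^+ p * X ^+ q -> X = Y.
Proof.
move=> X_gt0 Y_gt0 lt_pq; rewrite -(subnKC (ltnW lt_pq)) !exprD => e.
have XYp_neq0 : X ^+ p * Y ^+ p != 0 by rewrite mulf_neq0 // expf_neq0 // gt_eqF.
apply/eqP; rewrite -(eqrXn2 (_ : 0 < q - p)%N) ?ltW ?subn_gt0 //; apply/eqP.
apply: (mulfI XYp_neq0).
by transitivity (Y ^+ p * (X ^+ p * X ^+ (q - p))); [ring | rewrite -e; ring].
Qed.

Section ProdI.
Variables (R : realType) (n : nat) (z : 'I_n -> R).

Lemma prodI_setU1 l (S : {set 'I_n}) :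
  l \notin S -> prodI z (l |: S) = z l * prodI z S.
Proof. by move=> lS; rewrite /prodI big_setU1. Qed.

Lemma prodI_gt0 (S : {set 'I_n}) : (forall i, 0 < z i) -> 0 < prodI z S.
Proof. by move=> z_gt0; apply: prodr_gt0 => i _. Qed.

Lemma prodI_const (c : R) (S : {set 'I_n}) :
  {in S, forall l, z l = c} -> prodI z S = c ^+ #|S|.
Proof. by move=> zS; rewrite /prodI -prodr_const; apply: eq_bigr. Qed.

End ProdI.

Section Exchange.
Variables (R : realType) (n k : nat) (c : R) (x y : 'I_n -> R).
Hypothesis sum_k : forall I : {set 'I_n}, #|I| = k -> prodI x I + prodI y I = c.

Lemma exchange_prodI (S : {set 'I_n}) p q :
  p \notin S -> q \notin S -> #|S|.+1 = k ->
  (x p - x q) * prodI x S + (y p - y q) * prodI y S = 0.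
Proof.
move=> pS qS cardS.
have := @sum_k (p |: S); have := @sum_k (q |: S).
rewrite !cardsU1 pS qS !prodI_setU1 // => /(_ cardS) eq_q /(_ cardS) eq_p.
rewrite -[0](subrr c) -{1}eq_p -eq_q; ring.
Qed.

Hypotheses (x_gt0 : forall i, 0 < x i) (y_gt0 : forall i, 0 < y i).

Lemma eq_off_distinct_ratios i j l l' : (2 <= k)%N -> (k + 2 <= n)%N ->
  x i / y i != x j / y j -> l \notin [:: i; j] -> l' \notin [:: i; j] ->
  x l = x l' /\ y l = y l'.
Proof.
move=> k_ge2 kn ratio_ij; rewrite !inE !negb_or => /andP[li lj] /andP[l'i l'j].
have /exists_set_avoiding[S cardS S_avoid] :
    (k - 2 + size [:: i; j; l; l'] <= #|'I_n|)%N by rewrite card_ord /=; lia.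
have [iS jS lS l'S] : [/\ i \notin S, j \notin S, l \notin S & l' \notin S].
  by split; apply: S_avoid; rewrite !inE eqxx ?orbT.
set P := prodI x S; set Q := prodI y S.
have exchange_at z : z \notin S -> l != z -> l' != z ->
    (x l - x l') * (x z * P) + (y l - y l') * (y z * Q) = 0.
  move=> zS lz l'z; rewrite -!prodI_setU1 //; apply: exchange_prodI.
  - by rewrite in_setU1 negb_or lz lS.
  - by rewrite in_setU1 negb_or l'z l'S.
  by rewrite cardsU1 zS cardS; lia.
have det_ij : x i * y j != y i * x j.
  by move: ratio_ij; rewrite eqr_div ?(gt_eqF (y_gt0 _)) // [y i * _]mulrC.
have [] := cramer2_eq0 (u := (x l - x l') * P) (v := (y l - y l') * Q) det_ij.
- by rewrite -(exchange_at i iS li l'i); ring.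
- by rewrite -(exchange_at j jS lj l'j); ring.
have [P_neq0 Q_neq0] : P != 0 /\ Q != 0 by split; rewrite gt_eqF ?prodI_gt0.
move=> /eqP + /eqP; rewrite !mulf_eq0 !subr_eq0 (negbTE P_neq0) (negbTE Q_neq0) !orbF.
by move=> /eqP-> /eqP->.
Qed.

Variables (i0 l0 : 'I_n).
Hypothesis const_off_i0 : forall l, l != i0 -> x l = x l0 /\ y l = y l0.

Lemma const_off_i0_in (S : {set 'I_n}) :
  i0 \notin S -> {in S, forall l, x l = x l0 /\ y l = y l0}.
Proof. by move=> i0S l lS; apply: const_off_i0; apply: contraNneq i0S => <-. Qed.

Lemma exchange_const_off : (0 < k)%N -> (k < n)%N ->
  (x i0 - x l0) * x l0 ^+ k.-1 + (y i0 - y l0) * y l0 ^+ k.-1 = 0.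
Proof.
move=> k_gt0 k_lt_n.
have /exists_set_avoiding[S cardS S_avoid] : (k.-1 + size [:: i0; l0] <= #|'I_n|)%N.
  by rewrite card_ord /=; lia.
have [i0S l0S] : i0 \notin S /\ l0 \notin S.
  by split; apply: S_avoid; rewrite !inE eqxx ?orbT.
have const_S := const_off_i0_in i0S.
rewrite -cardS -(prodI_const (fun l lS => (const_S l lS).1)).
rewrite -(prodI_const (fun l lS => (const_S l lS).2)).
by apply: exchange_prodI; rewrite // cardS prednK.
Qed.

Lemma sum_const_off : (k < n)%N -> x l0 ^+ k + y l0 ^+ k = c.
Proof.
move=> k_lt_n.
have /exists_set_avoiding[S cardS S_avoid] : (k + size [:: i0] <= #|'I_n|)%N.
  by rewrite card_ord /=; lia.
have const_S := const_off_i0_in (S_avoid i0 (mem_head _ _)).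
rewrite -cardS -(prodI_const (fun l lS => (const_S l lS).1)).
by rewrite -(prodI_const (fun l lS => (const_S l lS).2)) sum_k.
Qed.

End Exchange.

Section TwoLevels.
Variables (R : realType) (n k m a b : nat) (x y : 'I_n -> R).
Hypotheses (k_ge2 : (2 <= k)%N) (k_lt_m : (k < m)%N) (m_le_n1 : (m <= n - 1)%N).
Hypothesis pow_neq : (a ^ m != b ^ k)%N.
Hypotheses (x_gt0 : forall i, 0 < x i) (y_gt0 : forall i, 0 < y i).
Hypothesis sum_k : forall I : {set 'I_n}, #|I| = k -> prodI x I + prodI y I = 2 * a%:R.
Hypothesis sum_m : forall J : {set 'I_n}, #|J| = m -> prodI x J + prodI y J = 2 * b%:R.

Lemma ratio_eq_of_const_off i0 l0 :
  (forall l, l != i0 -> x l = x l0 /\ y l = y l0) -> x i0 / y i0 = x l0 / y l0.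
Proof.
move=> const_off.
have [k_gt0 m_gt0 k_lt_n m_lt_n] : [/\ 0 < k, 0 < m, k < n & m < n]%N by split; lia.
have [det_eq0 | det_neq0] :=
  eqVneq (x l0 ^+ k.-1 * y l0 ^+ m.-1) (y l0 ^+ k.-1 * x l0 ^+ m.-1); last first.
  have [] := cramer2_eq0 det_neq0 (exchange_const_off sum_k const_off k_gt0 k_lt_n)
                                  (exchange_const_off sum_m const_off m_gt0 m_lt_n).
  by move=> /eqP + /eqP; rewrite !subr_eq0 => /eqP-> /eqP->.
have xy_l0 : x l0 = y l0.
  by apply: eq_of_swapped_powers det_eq0; rewrite ?x_gt0 ?y_gt0 //; lia.
have := sum_const_off sum_k const_off k_lt_n.
have := sum_const_off sum_m const_off m_lt_n.
rewrite -xy_l0 => sum_m_l0 sum_k_l0.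
have [pow_k pow_m] : x l0 ^+ k = a%:R /\ x l0 ^+ m = b%:R by split; lra.
by move: pow_neq; rewrite -(eqr_nat R) !natrX -pow_k -pow_m -!exprM mulnC eqxx.
Qed.

Lemma same_ratios i j : x i / y i = x j / y j.
Proof.
apply/eqP; apply: contraT => ratio_ij.
have /exists_notin[l0 l0_ij] : (size [:: i; j] < #|'I_n|)%N by rewrite card_ord /=; lia.
wlog ratio_il0 : i j ratio_ij l0_ij / x i / y i != x l0 / y l0.
  move=> wlog_il0; have [ratio_il0 | ] := eqVneq (x i / y i) (x l0 / y l0).
    apply: (wlog_il0 j i); first by rewrite eq_sym.
      by move: l0_ij; rewrite !inE orbC.
    by rewrite -ratio_il0 eq_sym.
  exact: wlog_il0 ratio_ij l0_ij.
have /exists_notin[l2] : (size [:: i; j; l0] < #|'I_n|)%N by rewrite card_ord /=; lia.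
rewrite !inE !negb_or => /and3P[l2i l2j l2l0].
have kn : (k + 2 <= n)%N by lia.
have eq_off := eq_off_distinct_ratios sum_k x_gt0 y_gt0 k_ge2 kn.
have const_off : forall l, l != i -> x l = x l0 /\ y l = y l0.
  move=> l li; have [-> // | ll0] := eqVneq l l0.
  have l_off : l \notin [:: i; l0] by rewrite !inE negb_or li ll0.
  have l2_off : l2 \notin [:: i; l0] by rewrite !inE negb_or l2i l2l0.
  have l2_ij : l2 \notin [:: i; j] by rewrite !inE negb_or l2i l2j.
  have [-> ->] := eq_off i l0 l l2 ratio_il0 l_off l2_off.
  exact: eq_off i j l2 l0 ratio_ij l2_ij l0_ij.
by move: ratio_il0; rewrite (ratio_eq_of_const_off const_off) eqxx.
Qed.

End TwoLevels.

Theorem lemma4p1 (R : realType) (n k m a b : nat) (x y : 'I_n -> R) :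
  (0 < a)%N -> (0 < b)%N ->
  (2 <= k)%N -> (k < m)%N -> (m <= n - 1)%N ->
  (a ^ m != b ^ k)%N ->
  (forall i, 0 < x i) -> (forall i, 0 < y i) ->
  (forall I : {set 'I_n}, #|I| = k -> prodI x I + prodI y I = 2 * a%:R) ->
  (forall J : {set 'I_n}, #|J| = m -> prodI x J + prodI y J = 2 * b%:R) ->
  exists c : R, 0 < c /\ forall i, x i / y i = c.
Proof.
(* 0 < a and 0 < b already follow from the positivity of x and y. *)
move=> _ _ k_ge2 k_lt_m m_le_n1 pow_neq x_gt0 y_gt0 sum_k sum_m.
have n_gt0 : (0 < n)%N by lia.
pose i0 := Ordinal n_gt0.
exists (x i0 / y i0); split; first exact: divr_gt0.
by move=> i; apply: (same_ratios k_ge2 k_lt_m m_le_n1 pow_neq x_gt0 y_gt0 sum_k sum_m).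
Qed.
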